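(* Let $H$ be a graph. Then there exists a local metric basis of $K_1+H$ containing the vertex of $K_1$ if and only if $H\in\mathcal{G}$.
   Context: All graphs are finite and simple with at least one vertex. $K_1+H$ is the join: a new vertex joined by edges to every vertex of $H$. $d_G$ is shortest-path distance ($+\infty$ between components), $d_{G,2}=\min\{d_G,2\}$; $s$ distinguishes $x,y$ w.r.t. $d$ if $d(s,x)\ne d(s,y)$. A local metric basis of a connected graph $G$ is a minimum-size set $S\subseteq V(G)$ such that any two adjacent vertices are distinguished w.r.t. $d_G$ by some vertex of $S$. A local adjacency basis of $H$ is a minimum-size set $S\subseteq V(H)$ such that any two adjacent vertices are distinguished w.r.t. $d_{H,2}$ by some vertex of $S$. $\mathcal{G}$: class of graphs $H$ such that every local adjacency basis $B$ of $H$ satisfies $B\subseteq N_H(v)$ for some $v\in V(H)$. *)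

(* Finite simple graphs: symmetric irreflexive e : rel T on a finType T. *)
From mathcomp Require Import all_boot.
Set Implicit Arguments. Unset Strict Implicit. Unset Printing Implicit Defensive.

Section Graphs.
Variable T : finType.
Implicit Types (e : rel T) (S : {set T}).

Definition walkn e (n : nat) (x y : T) : bool :=
  [exists p : n.-tuple T, path e x p && (last x p == y)].

(* shortest-path distance d_G; None encodes +infinity (different components).
   A shortest path has at most #|T| - 1 edges, so searching n < #|T| suffices. *)
Definition dist e (x y : T) : option nat :=
  let k := find (fun n => walkn e n x y) (iota 0 #|T|) in
  if k < #|T| then Some k else None.

Definition dist2 e (x y : T) : nat :=
  match dist e x y with Some n => minn n 2 | None => 2 end.

Definition adj_distinguishing {X : eqType} (d : T -> T -> X) e S : Prop :=
  forall x y, e x y -> exists2 s, s \in S & d s x != d s y.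

Definition local_metric_basis e S : Prop :=
  adj_distinguishing (dist e) e S /\
  forall S', adj_distinguishing (dist e) e S' -> #|S| <= #|S'|.

Definition local_adjacency_basis e S : Prop :=
  adj_distinguishing (dist2 e) e S /\
  forall S', adj_distinguishing (dist2 e) e S' -> #|S| <= #|S'|.

Definition open_nbhd e (v : T) : {set T} := [set u | e v u].

Definition in_classG e : Prop :=
  forall B, local_adjacency_basis e B -> exists v, B \subset open_nbhd e v.

End Graphs.

(* join K_1 + H: vertex set option T, the new vertex is None *)
Definition join_K1 (T : finType) (e : rel T) : rel (option T) :=
  fun u v => match u, v with
             | Some x, Some y => e x y
             | None, Some _ | Some _, None => true
             | None, None => false
             end.

(** In [K_1 + H] two distinct non-adjacent vertices have the apex as common
    neighbour, so distances in the join are at most 2, and between vertices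
    of [H] they are exactly [d_{H,2}].  Hence a set [S] of the join separates
    adjacent vertices of [H] iff its trace on [H] is adjacency-distinguishing
    in [H], while a vertex [s] of [H] separates the apex from [x] iff [s] is
    not a neighbour of [x].  So a minimum set may avoid the apex exactly when
    some local adjacency basis of [H] lies in no open neighbourhood. *)
From mathcomp Require Import all_boot.
Set Implicit Arguments. Unset Strict Implicit. Unset Printing Implicit Defensive.

Lemma find_iota0 (p : pred nat) N k :
  k < N -> p k -> (forall j, j < k -> ~~ p j) -> find p (iota 0 N) = k.
Proof.
move=> kN pk before_k.
have has_p : has p (iota 0 N) by apply/hasP; exists k; rewrite ?mem_iota.
have find_lt : find p (iota 0 N) < N by move: has_p; rewrite has_find size_iota.
have p_find : p (find p (iota 0 N)) by have := nth_find 0 has_p; rewrite nth_iota.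
case: (ltngtP (find p (iota 0 N)) k) => // [/before_k|lt_k_find].
  by rewrite p_find.
by have := before_find 0 lt_k_find; rewrite nth_iota // pk.
Qed.

Section Distances.
Variables (V : finType) (g : rel V).

Lemma walkn0 x y : walkn g 0 x y = (x == y).
Proof.
apply/existsP/eqP => [[p]|->]; last by exists [tuple] => /=.
by rewrite tuple0 /= => /eqP.
Qed.

Lemma walkn1 x y : walkn g 1 x y = g x y.
Proof.
apply/existsP/idP => [[[[|a [|b s]]]]|gxy] //=.
  by move=> _ /andP[/andP[gxa _] /eqP <-].
by exists [tuple y]; rewrite /= gxy eqxx.
Qed.

Lemma walkn2 x z y : g x z -> g z y -> walkn g 2 x y.
Proof. by move=> gxz gzy; apply/existsP; exists [tuple z; y]; rewrite /= gxz gzy eqxx. Qed.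

Lemma dist_Some x y k :
  k < #|V| -> walkn g k x y -> (forall j, j < k -> ~~ walkn g j x y) ->
  dist g x y = Some k.
Proof. by move=> kV walk_k before_k; rewrite /dist (find_iota0 kV walk_k before_k) kV. Qed.

Lemma dist_Some_walkn x y k : dist g x y = Some k -> walkn g k x y.
Proof.
rewrite /dist; case: ifP => // found [<-].
have has_walk : has (fun n => walkn g n x y) (iota 0 #|V|).
  by rewrite has_find size_iota.
by have := nth_find 0 has_walk; rewrite nth_iota.
Qed.

(* Both [d_{G,2}] for every graph and [d_G] for graphs of diameter at most 2. *)
Definition step_dist x y := if x == y then 0 else if g x y then 1 else 2.

Lemma dist_step_dist_lt2 x y :
  step_dist x y < 2 -> dist g x y = Some (step_dist x y).
Proof.
rewrite /step_dist; have [<- _|neq_xy] := eqVneq x y.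
  by rewrite (@dist_Some x x 0) ?walkn0 //; apply/card_gt0P; exists x.
case: ifP => // gxy _; rewrite (@dist_Some x y 1) ?walkn1 //.
  by apply: leq_trans (max_card [set x; y]); rewrite cards2 neq_xy.
by case=> // _; rewrite walkn0.
Qed.

Lemma dist2_step_dist x y : dist2 g x y = step_dist x y.
Proof.
rewrite /dist2; have [near|] := ltnP (step_dist x y) 2.
  by rewrite dist_step_dist_lt2 //; apply/minn_idPl/ltnW.
rewrite /step_dist; case: eqVneq => // neq_xy; case: ifP => // gxy _.
case dist_xy: (dist g x y) => [[|[|k]]|] //; have := dist_Some_walkn dist_xy.
  by rewrite walkn0 (negPf neq_xy).
by rewrite walkn1 gxy.
Qed.

Lemma dist_step_dist x y :
  (x != y -> ~~ g x y -> exists2 z, g x z & g z y) ->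
  dist g x y = Some (step_dist x y).
Proof.
move=> common_nbr; have [/dist_step_dist_lt2//|] := ltnP (step_dist x y) 2.
rewrite /step_dist; case: eqVneq => // neq_xy; case: ifPn => // gxy _.
have [z gxz gzy] := common_nbr neq_xy gxy.
apply: dist_Some; [|exact: walkn2 gxz gzy|].
  have z_new : z \notin [set x; y].
    by rewrite !inE; apply/norP; split; apply/eqP=> z_eq; move: gxy;
      rewrite -?z_eq ?gzy ?gxz.
  by apply: leq_trans (max_card (z |: [set x; y])); rewrite cardsU1 z_new cards2 neq_xy.
by case=> [|[|]] // _; rewrite ?walkn0 ?walkn1 ?neq_xy.
Qed.

End Distances.

Section MinimumDistinguishing.
Variables (V : finType) (X : eqType) (d : V -> V -> X) (g : rel V).

Definition adj_distinguishingb (S : {set V}) :=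
  [forall x, forall y, g x y ==> [exists s in S, d s x != d s y]].

Lemma adj_distinguishingP S :
  reflect (adj_distinguishing d g S) (adj_distinguishingb S).
Proof.
apply: (iffP forallP) => [distinguish x y gxy|distinguish x].
  have /forallP/(_ y) := distinguish x; rewrite gxy => /existsP[s /andP[sS ds]].
  by exists s.
apply/forallP=> y; apply/implyP=> /distinguish[s sS ds].
by apply/existsP; exists s; rewrite sS.
Qed.

Lemma exists_min_adj_distinguishing :
  adj_distinguishing d g setT ->
  exists S, adj_distinguishing d g S /\
            forall S', adj_distinguishing d g S' -> #|S| <= #|S'|.
Proof.
move=> /adj_distinguishingP setT_dist.
have [S /adj_distinguishingP S_dist S_min] :=
  arg_minnP (fun S : {set V} => #|S|) setT_dist.
by exists S; split=> // S' /adj_distinguishingP; apply: S_min.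
Qed.

End MinimumDistinguishing.

Lemma card_preim_Some (T : finType) (S : {set option T}) :
  #|S| = #|Some @^-1: S| + (None \in S).
Proof.
rewrite (cardsD1 None) addnC; congr (_ + _).
have -> : S :\ None = Some @: (Some @^-1: S).
  apply/setP=> -[x|]; rewrite !inE /=.
    by rewrite (mem_imset _ _ Some_inj) inE.
  by apply/esym/negbTE/imsetP=> -[].
by rewrite card_imset //; apply: Some_inj.
Qed.

Lemma card_None_Some (T : finType) (B : {set T}) : #|None |: Some @: B| = #|B|.+1.
Proof.
rewrite cardsU1 card_imset; last exact: Some_inj.
by have /negPf-> : None \notin Some @: B by apply/imsetP=> -[].
Qed.

Section Join.
Variables (T : finType) (e : rel T).
Hypotheses (e_sym : symmetric e) (e_irr : irreflexive e).

Local Notation G := (join_K1 e).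

Lemma dist_join_K1 u v : dist G u v = Some (step_dist G u v).
Proof.
by apply: dist_step_dist; case: u v => [x|] [y|] // _ _; exists None.
Qed.

Lemma dist_join_K1_Some s x : dist G (Some s) (Some x) = Some (dist2 e s x).
Proof. by rewrite dist_join_K1 dist2_step_dist. Qed.

Lemma join_K1_separates_apex s x :
  (dist G (Some s) None != dist G (Some s) (Some x)) = (s \notin open_nbhd e x).
Proof.
rewrite !dist_join_K1 /step_dist /= inE (inj_eq Some_inj) (e_sym x).
by case: ifP => [/eqP[->]|_]; rewrite ?e_irr //; case: (e s x).
Qed.

Lemma adj_distinguishing_dist2_setT : adj_distinguishing (dist2 e) e setT.
Proof.
move=> x y exy; exists x; rewrite ?inE // !dist2_step_dist /step_dist eqxx exy.
by case: ifP => // /eqP eq_xy; move: exy; rewrite eq_xy e_irr.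
Qed.

Lemma adj_distinguishing_join_preim S :
  adj_distinguishing (dist G) G S ->
  adj_distinguishing (dist2 e) e (Some @^-1: S).
Proof.
move=> S_dist x y exy; have [[s|] sS] := S_dist (Some x) (Some y) exy.
  by rewrite !dist_join_K1_Some (inj_eq Some_inj) => ds; exists s; rewrite ?inE.
by rewrite !dist_join_K1.
Qed.

Lemma adj_distinguishing_join_apex_free S x :
  adj_distinguishing (dist G) G S -> None \notin S ->
  ~~ (Some @^-1: S \subset open_nbhd e x).
Proof.
move=> S_dist noneS; apply/subsetPn.
have [[s|] sS] := S_dist None (Some x) isT; last by rewrite sS in noneS.
by rewrite join_K1_separates_apex => s_far; exists s; rewrite // inE.
Qed.

Lemma adj_distinguishing_join_Some B :
  adj_distinguishing (dist2 e) e B ->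
  (forall v, ~~ (B \subset open_nbhd e v)) ->
  adj_distinguishing (dist G) G (Some @: B).
Proof.
move=> B_dist not_in_nbhd [x|] [y|] //= Gxy.
- have [s sB ds] := B_dist x y Gxy; exists (Some s); first exact: imset_f.
  by rewrite !dist_join_K1_Some (inj_eq Some_inj).
- have /subsetPn[s sB s_far] := not_in_nbhd x; exists (Some s); first exact: imset_f.
  by rewrite eq_sym join_K1_separates_apex.
- have /subsetPn[s sB s_far] := not_in_nbhd y; exists (Some s); first exact: imset_f.
  by rewrite join_K1_separates_apex.
Qed.

Lemma adj_distinguishing_join_None_Some B :
  adj_distinguishing (dist2 e) e B ->
  adj_distinguishing (dist G) G (None |: Some @: B).
Proof.
move=> B_dist [x|] [y|] //= Gxy; try by exists None; rewrite ?setU11 // !dist_join_K1.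
have [s sB ds] := B_dist x y Gxy; exists (Some s).
  by rewrite setU1r ?imset_f.
by rewrite !dist_join_K1_Some (inj_eq Some_inj).
Qed.

End Join.

Theorem proposition1 (T : finType) (e : rel T) :
  symmetric e -> irreflexive e -> 0 < #|T| ->
  ((exists S : {set option T},
      local_metric_basis (join_K1 e) S /\ None \in S)
   <-> in_classG e).
Proof.
move=> e_sym e_irr _; split.
  move=> [S [[S_dist S_min] noneS]] B [B_dist B_min].
  apply/existsP; apply: contraT; rewrite negb_exists => /forallP not_in_nbhd.
  have := S_min _ (adj_distinguishing_join_Some e_sym e_irr B_dist not_in_nbhd).
  rewrite card_imset ?(card_preim_Some S) ?noneS ?addn1; last exact: Some_inj.
  by rewrite ltnNge (B_min _ (adj_distinguishing_join_preim S_dist)).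
move=> classG.
have [B [B_dist B_min]] :=
  exists_min_adj_distinguishing (adj_distinguishing_dist2_setT e_irr).
exists (None |: Some @: B); split; last exact: setU11.
split=> [|S' S'_dist]; first exact: adj_distinguishing_join_None_Some.
have trace_dist := adj_distinguishing_join_preim S'_dist.
rewrite card_None_Some (card_preim_Some S'); case: (boolP (None \in S')) => noneS'.
  by rewrite addn1 ltnS B_min.
rewrite addn0 ltn_neqAle B_min // andbT; apply/eqP=> card_eq.
have [v trace_in_nbhd] : exists v, Some @^-1: S' \subset open_nbhd e v.
  by apply: classG; split=> // S2 /B_min; rewrite card_eq.
by have := adj_distinguishing_join_apex_free e_sym e_irr v S'_dist noneS';
  rewrite trace_in_nbhd.
Qed.
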